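(* (Subject expansion.) If $\Gamma\vdash t_2:\sigma$ is derivable in $\cap J$ and $t_1\to_{d\beta} t_2$ is a non-erasing step, then $\Gamma\vdash t_1:\sigma$ is derivable in $\cap J$.
   Context: Terms $\mathtt T_J$: $t,u,r ::= x \mid \lambda x.t \mid t(u,y.r)$ ($y$ bound in $r$), up to $\alpha$-equivalence; $\{u/x\}t$ capture-avoiding substitution. List contexts $\mathtt D ::= \Diamond \mid t(u,y.\mathtt D)$. Distant beta: $\mathtt D\langle\lambda x.t\rangle(u,y.r) \mapsto_{d\beta} \{\{u/x\}\mathtt D\langle t\rangle/y\}r$ (variables bound by $\mathtt D$ not free in $u$, $x$ not in $\mathtt D$), $\to_{d\beta}$ its closure under all contexts. A step is non-erasing if the contracted redex $\mathtt D\langle\lambda x.t\rangle(u,y.r)$ satisfies $x\in\mathrm{fv}(t)$ and $y\in\mathrm{fv}(r)$. System $\cap J$: types $\sigma,\tau ::= \alpha \mid \mathcal M\to\sigma$, $\mathcal M=[\sigma_i]_{i\in I}$ a finite possibly empty multiset; $\sqcup$ multiset union; environments map variables to multisets, $\wedge$ pointwise union, $\Gamma;x:\mathcal M$ extension with $x\notin\mathrm{dom}\,\Gamma$. $\mathrm{ch}(\mathcal M)=\mathcal M$ if $\mathcal M\ne[\,]$, $\mathrm{ch}([\,])=[\tau]$ for an arbitrary $\tau$. Rules: (var) $x:[\sigma]\vdash x:\sigma$; (abs) from $\Gamma;x:\mathcal M\vdash t:\sigma$ infer $\Gamma\vdash\lambda x.t:\mathcal M\to\sigma$; (many) from $(\Gamma_i\vdash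 t:\sigma_i)_{i\in I}$, $I\ne\emptyset$, infer $\wedge_i\Gamma_i\vdash t:[\sigma_i]_{i\in I}$; (app) from $\Gamma\vdash t:\mathrm{ch}([\mathcal M_i\to\tau_i]_{i\in I})$, $\Delta\vdash u:\mathrm{ch}(\sqcup_i\mathcal M_i)$, $\Lambda;y:[\tau_i]_{i\in I}\vdash r:\sigma$ infer $\Gamma\wedge\Delta\wedge\Lambda\vdash t(u,y.r):\sigma$. *)

(* Terms of Lambda-J in de Bruijn representation (alpha-equivalence
   is built in); intersection type system cap-J with multisets as lists taken up
   to (deep) permutation. *)
From Stdlib Require Import List Permutation Arith.
Import ListNotations.

(* App t u r  represents  t(u, y.r) ; index 0 in r is the bound y. *)
Inductive term : Type :=
| Var : nat -> term
| Lam : term -> term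
| App : term -> term -> term -> term.

Fixpoint lift (d c : nat) (t : term) : term :=
  match t with
  | Var n => Var (if Nat.leb c n then n + d else n)
  | Lam t' => Lam (lift d (S c) t')
  | App a b r => App (lift d c a) (lift d c b) (lift d (S c) r)
  end.

(* subst n u t : capture-avoiding {u/n}t, where u lives in the scope outside the
   n binders crossed; indices above n are decremented (index n is consumed). *)
Fixpoint subst (n : nat) (u : term) (t : term) : term :=
  match t with
  | Var m =>
      match Nat.compare m n with
      | Eq => lift n 0 u
      | Gt => Var (pred m)
      | Lt => Var m
      end
  | Lam t' => Lam (subst (S n) u t')
  | App a b r => App (subst n u a) (subst n u b) (subst (S n) u r)
  end.

Fixpoint occurs (n : nat) (t : term) : bool :=
  match t with
  | Var m => Nat.eqb m n
  | Lam t' => occurs (S n) t'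
  | App a b r => occurs n a || occurs n b || occurs (S n) r
  end.

Inductive lctx : Type :=
| LHole : lctx
| LApp : term -> term -> lctx -> lctx.

Fixpoint plug (D : lctx) (s : term) : term :=
  match D with
  | LHole => s
  | LApp t u D' => App t u (plug D' s)
  end.

Fixpoint ldepth (D : lctx) : nat :=
  match D with
  | LHole => 0
  | LApp _ _ D' => S (ldepth D')
  end.

(* Distant beta at the root:
   D<\x.t>(u, y.r)  |->  {{u/x} D<t> / y} r .
   Under the k = ldepth D binders of D, u must be lifted by k; the side
   conditions of the paper are automatic in de Bruijn notation. *)
Inductive dbeta_root : term -> term -> Prop :=
| DBetaRoot : forall D t u r,
    dbeta_root (App (plug D (Lam t)) u r)
               (subst 0 (plug D (subst 0 (lift (ldepth D) 0 u) t)) r).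

Inductive dbeta_root_ne : term -> term -> Prop :=
| DBetaRootNE : forall D t u r,
    occurs 0 t = true -> occurs 0 r = true ->
    dbeta_root_ne (App (plug D (Lam t)) u r)
                  (subst 0 (plug D (subst 0 (lift (ldepth D) 0 u) t)) r).

Inductive ctx_closure (R : term -> term -> Prop) : term -> term -> Prop :=
| CRoot : forall t t', R t t' -> ctx_closure R t t'
| CLam : forall t t', ctx_closure R t t' -> ctx_closure R (Lam t) (Lam t')
| CApp1 : forall t t' u r, ctx_closure R t t' -> ctx_closure R (App t u r) (App t' u r)
| CApp2 : forall t u u' r, ctx_closure R u u' -> ctx_closure R (App t u r) (App t u' r)
| CApp3 : forall t u r r', ctx_closure R r r' -> ctx_closure R (App t u r) (App t u r').

Definition dbeta_step := ctx_closure dbeta_root.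
Definition dbeta_step_ne := ctx_closure dbeta_root_ne.

(* sigma ::= alpha | M -> sigma ; multisets M represented by lists *)
Inductive ty : Type :=
| TVar : nat -> ty
| TArr : list ty -> ty -> ty.

Inductive ty_eq : ty -> ty -> Prop :=
| TyEqVar : forall a, ty_eq (TVar a) (TVar a)
| TyEqArr : forall M M1 M' s s',
    Permutation M M1 -> Forall2 ty_eq M1 M' -> ty_eq s s' ->
    ty_eq (TArr M s) (TArr M' s').

Definition mset_eq (M M' : list ty) : Prop :=
  exists M1, Permutation M M1 /\ Forall2 ty_eq M1 M'.

Definition env := nat -> list ty.

Definition env_eq (G G' : env) : Prop := forall n, mset_eq (G n) (G' n).

Definition env_single (x : nat) (s : ty) : env :=
  fun n => if Nat.eqb n x then [s] else [].

Definition env_union (G D : env) : env := fun n => G n ++ D n.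

Definition env_ext (M : list ty) (G : env) : env :=
  fun n => match n with 0 => M | S m => G m end.

Definition ch (tau : ty) (M : list ty) : list ty :=
  match M with [] => [tau] | _ => M end.

Inductive typed : env -> term -> ty -> Prop :=
| T_var : forall x s, typed (env_single x s) (Var x) s
| T_abs : forall G M t s,
    typed (env_ext M G) t s -> typed G (Lam t) (TArr M s)
| T_app : forall (G D Lam_env : env) (t u r : term) (s : ty)
      (L : list (list ty * ty)) (tau0 tau1 : ty),
    mtyped G t (ch tau0 (map (fun p => TArr (fst p) (snd p)) L)) ->
    mtyped D u (ch tau1 (concat (map fst L))) ->
    typed (env_ext (map snd L) Lam_env) r s ->
    typed (env_union G (env_union D Lam_env)) (App t u r) s
| T_conv : forall G G' t s s',
    typed G t s -> env_eq G G' -> ty_eq s s' -> typed G' t s'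
with mtyped : env -> term -> list ty -> Prop :=
| M_one : forall G t s, typed G t s -> mtyped G t [s]
| M_cons : forall G D t s M,
    typed G t s -> mtyped D t M -> mtyped (env_union G D) t (s :: M)
| M_conv : forall G G' t M M',
    mtyped G t M -> env_eq G G' -> mset_eq M M' -> mtyped G' t M'.

(* The core is an anti-substitution lemma: a typing of {u/x}t splits as a
   typing of t in which x receives some multiset M, together with typings of u
   at the members of M, the environments adding up.  Since the system is
   relevant (a free variable of a typed term always receives a nonempty
   multiset), non-erasure guarantees that both multisets produced by reversing
   the contraction, the one of x in t and the one of y in r, are nonempty, so
   they can be fed back into the (app) rule without resorting to ch.  The list
   context D is peeled off one layer at a time; u lives under the binders of D,
   and an anti-lifting lemma moves its typing back out.  Expansion is then
   closed under arbitrary contexts by the generation lemmas. *)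

From Stdlib Require Import List Permutation Arith Lia Setoid Morphisms.
Import ListNotations.

(** * Multiset equality of types *)

(* [mset_eq] is [Forall2_perm ty_eq]. *)
Definition Forall2_perm {A} (R : A -> A -> Prop) (l l' : list A) : Prop :=
  exists l1, Permutation l l1 /\ Forall2 R l1 l'.

Section Forall2Perm.
Variables (A : Type) (R : A -> A -> Prop).

Lemma Forall2_perm_sym_in l l' :
  Forall (fun x => forall y, R x y -> R y x) l ->
  Forall2_perm R l l' -> Forall2_perm R l' l.
Proof.
  intros Hsym [l1 [Hp HR]].
  assert (HR' : Forall2 (fun x y => R y x) l1 l').
  { apply (Permutation_Forall Hp) in Hsym.
    clear Hp; induction HR; inversion Hsym; constructor; auto. }
  destruct (Permutation_Forall2 (Permutation_sym Hp) HR') as [l2 [Hp2 HR2]].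
  exists l2; split; [exact Hp2|exact (Forall2_flip HR2)].
Qed.

Lemma Forall2_perm_trans_in l l' l'' :
  Forall (fun x => forall y z, R x y -> R y z -> R x z) l ->
  Forall2_perm R l l' -> Forall2_perm R l' l'' -> Forall2_perm R l l''.
Proof.
  intros Htrans [l1 [Hp1 HR1]] [l2 [Hp2 HR2]].
  destruct (Permutation_Forall2 Hp2 (Forall2_flip HR1)) as [l3 [Hp3 HR3]].
  apply Forall2_flip in HR3.
  exists l3; split; [now transitivity l1|].
  apply (Permutation_Forall (Permutation_trans Hp1 Hp3)) in Htrans.
  clear -Htrans HR3 HR2; revert l'' HR2.
  induction HR3; intros l'' HR2; inversion HR2; inversion Htrans; subst;
    constructor; eauto.
Qed.

End Forall2Perm.

(* The generated [ty_ind] has no hypothesis for the members of a domain multiset. *)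
Fixpoint ty_nested_ind (P : ty -> Prop) (HV : forall a, P (TVar a))
  (HA : forall M s, Forall P M -> P s -> P (TArr M s)) (t : ty) : P t :=
  match t with
  | TVar a => HV a
  | TArr M s =>
      HA M s ((fix all (l : list ty) : Forall P l :=
                 match l with
                 | [] => Forall_nil P
                 | x :: l' => Forall_cons x (ty_nested_ind P HV HA x) (all l')
                 end) M)
        (ty_nested_ind P HV HA s)
  end.

Lemma ty_eq_TArr M M' s s' :
  ty_eq (TArr M s) (TArr M' s') <-> mset_eq M M' /\ ty_eq s s'.
Proof.
  split.
  - intro H; inversion H; subst; split; [exists M1|]; auto.
  - intros [[M1 [Hp HM]] Hs]; econstructor; eauto.
Qed.

Lemma ty_eq_refl t : ty_eq t t.
Proof.
  induction t as [a|M s HM Hs] using ty_nested_ind; [constructor|].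
  apply ty_eq_TArr; split; [exists M; split|]; auto.
  induction HM; constructor; auto.
Qed.

Lemma ty_eq_sym t t' : ty_eq t t' -> ty_eq t' t.
Proof.
  revert t'; induction t as [a|M s HM Hs] using ty_nested_ind;
    intros [b|M' s'] H; inversion H; subst; [constructor|].
  apply ty_eq_TArr in H as [HMM' Hss']; apply ty_eq_TArr; split; auto.
  exact (Forall2_perm_sym_in _ _ _ _ HM HMM').
Qed.

Lemma ty_eq_trans t t' t'' : ty_eq t t' -> ty_eq t' t'' -> ty_eq t t''.
Proof.
  revert t' t''; induction t as [a|M s HM Hs] using ty_nested_ind;
    intros [b|M' s'] [c|M'' s''] H H'; inversion H; inversion H'; subst; [constructor|].
  apply ty_eq_TArr in H as [HM1 Hs1], H' as [HM2 Hs2]; apply ty_eq_TArr; split; eauto.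
  exact (Forall2_perm_trans_in _ _ _ _ _ HM HM1 HM2).
Qed.

#[local] Instance ty_eq_Equivalence : Equivalence ty_eq.
Proof. split; [exact ty_eq_refl|exact ty_eq_sym|exact ty_eq_trans]. Qed.

Lemma Forall2_ty_eq_refl M : Forall2 ty_eq M M.
Proof. induction M; constructor; auto using ty_eq_refl. Qed.

Lemma mset_eq_perm M M' : Permutation M M' -> mset_eq M M'.
Proof. intro Hp; exists M'; split; [exact Hp|apply Forall2_ty_eq_refl]. Qed.

#[local] Instance mset_eq_Equivalence : Equivalence mset_eq.
Proof.
  split.
  - intro M; now apply mset_eq_perm.
  - intros M M'; apply Forall2_perm_sym_in, Forall_forall; intros; now symmetry.
  - intros M M' M''; apply Forall2_perm_trans_in, Forall_forall; intros; now transitivity y.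
Qed.

#[local] Instance app_mset_eq_Proper : Proper (mset_eq ==> mset_eq ==> mset_eq) (@app ty).
Proof.
  intros A A' [A1 [HpA HA]] B B' [B1 [HpB HB]].
  exists (A1 ++ B1); split; [now apply Permutation_app|now apply Forall2_app].
Qed.

#[local] Instance TArr_Proper : Proper (mset_eq ==> ty_eq ==> ty_eq) TArr.
Proof. intros M M' HM s s' Hs; now apply ty_eq_TArr. Qed.

Lemma mset_eq_nil M : mset_eq M [] -> M = [].
Proof.
  intros [M1 [Hp HM]]; inversion HM; subst; exact (Permutation_nil (Permutation_sym Hp)).
Qed.

#[local] Instance env_eq_Equivalence : Equivalence env_eq.
Proof.
  split.
  - intros G n; reflexivity.
  - intros G G' H n; now symmetry.
  - intros G G' G'' H H' n; now rewrite (H n).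
Qed.

Lemma env_eq_nonempty G G' n : env_eq G G' -> G n <> [] -> G' n <> [].
Proof. intros H HG E; apply HG, mset_eq_nil; rewrite <- E; apply H. Qed.

Lemma env_eq_pointwise G G' : (forall n, G n = G' n) -> env_eq G G'.
Proof. intros H n; now rewrite H. Qed.

Lemma env_eq_perm G G' : (forall n, Permutation (G n) (G' n)) -> env_eq G G'.
Proof. intros H n; exact (mset_eq_perm _ _ (H n)). Qed.

#[local] Instance env_union_Proper : Proper (env_eq ==> env_eq ==> env_eq) env_union.
Proof. intros G G' HG D D' HD n; unfold env_union; now rewrite (HG n), (HD n). Qed.

#[local] Instance env_ext_Proper : Proper (mset_eq ==> env_eq ==> env_eq) env_ext.
Proof. intros M M' HM G G' HG [|n]; [exact HM|exact (HG n)]. Qed.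

#[local] Instance env_single_Proper : Proper (eq ==> ty_eq ==> env_eq) env_single.
Proof.
  intros x _ <- s s' Hs n; unfold env_single; destruct (n =? x); [|reflexivity].
  exists [s]; split; [reflexivity|constructor; auto].
Qed.

#[local] Instance typed_Proper : Proper (env_eq ==> eq ==> ty_eq ==> iff) typed.
Proof.
  intros G G' HG t _ <- s s' Hs; split; intro H; eapply T_conv; eauto; now symmetry.
Qed.

#[local] Instance mtyped_Proper : Proper (env_eq ==> eq ==> mset_eq ==> iff) mtyped.
Proof.
  intros G G' HG t _ <- M M' HM; split; intro H; eapply M_conv; eauto; now symmetry.
Qed.

(** * Environments *)

Definition env_empty : env := fun _ => [].
Definition env_tail (G : env) : env := fun n => G (S n).

(* The environment of [lift d c t] when [G] is that of [t]; [env_insert n M G]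
   undoes the renumbering of [subst n]: index [n] receives [M], higher ones move up. *)
Definition env_lift (d c : nat) (G : env) : env :=
  fun n => if n <? c then G n else if n <? c + d then [] else G (n - d).

Definition env_insert (n : nat) (M : list ty) (G : env) : env :=
  fun m => if m <? n then G m else if m =? n then M else G (pred m).

Ltac env_pointwise :=
  apply env_eq_pointwise; intros [|];
  unfold env_union, env_single, env_ext, env_lift, env_insert, env_tail, env_empty;
  repeat match goal with
         | |- context [Nat.ltb ?a ?b] => destruct (Nat.ltb_spec a b)
         | |- context [Nat.eqb ?a ?b] => destruct (Nat.eqb_spec a b)
         end;
  cbv beta iota; rewrite ?app_nil_r; try reflexivity; try lia;
  try (f_equal; lia).

Lemma env_ext_tail G : env_eq (env_ext (G 0) (env_tail G)) G.
Proof. env_pointwise. Qed.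

Lemma env_ext_eq M G G' :
  env_eq (env_ext M G) G' <-> mset_eq M (G' 0) /\ env_eq G (env_tail G').
Proof.
  split.
  - intro H; split; [exact (H 0)|intro n; exact (H (S n))].
  - intros [HM HG]; now rewrite HM, HG, env_ext_tail.
Qed.

Lemma env_union_assoc A B C :
  env_eq (env_union A (env_union B C)) (env_union (env_union A B) C).
Proof. env_pointwise; apply app_assoc. Qed.

Lemma env_union_comm A B : env_eq (env_union A B) (env_union B A).
Proof. apply env_eq_perm; intro; apply Permutation_app_comm. Qed.

Lemma env_union_swap A B C D :
  env_eq (env_union (env_union A B) (env_union C D))
         (env_union (env_union A C) (env_union B D)).
Proof.
  apply env_eq_perm; intro; unfold env_union.
  rewrite <- !app_assoc; apply Permutation_app_head.
  rewrite !app_assoc; apply Permutation_app_tail, Permutation_app_comm.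
Qed.

Lemma env_union_empty_l A : env_eq (env_union env_empty A) A.
Proof. env_pointwise. Qed.

Lemma env_union_empty_r A : env_eq (env_union A env_empty) A.
Proof. env_pointwise. Qed.

Lemma env_lift_union d c A B :
  env_eq (env_lift d c (env_union A B)) (env_union (env_lift d c A) (env_lift d c B)).
Proof. env_pointwise. Qed.

Lemma env_tail_union A B :
  env_eq (env_tail (env_union A B)) (env_union (env_tail A) (env_tail B)).
Proof. env_pointwise. Qed.

Lemma env_insert_union n M M' A B :
  env_eq (env_union (env_insert n M A) (env_insert n M' B))
         (env_insert n (M ++ M') (env_union A B)).
Proof. env_pointwise. Qed.

Lemma env_insert_S n M G :
  env_eq (env_insert (S n) M G) (env_ext (G 0) (env_insert n M (env_tail G))).
Proof. env_pointwise. Qed.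

Lemma env_insert_0 M G : env_eq (env_insert 0 M G) (env_ext M G).
Proof. env_pointwise. Qed.

Lemma env_lift_0 D : env_eq (env_lift 0 0 D) D.
Proof. env_pointwise. Qed.

Lemma env_tail_lift_shift d G : env_eq (env_tail (env_lift (S d) 0 G)) (env_lift d 0 G).
Proof. env_pointwise. Qed.

Lemma env_tail_lift d c G : env_eq (env_tail (env_lift d (S c) G)) (env_lift d c (env_tail G)).
Proof. env_pointwise. Qed.

Lemma env_ext_eq_union_lift M G A B d :
  env_eq (env_ext M G) (env_union A (env_lift (S d) 0 B)) ->
  mset_eq M (A 0) /\ env_eq G (env_union (env_tail A) (env_lift d 0 B)).
Proof.
  intro H; apply env_ext_eq in H as [HM HG]; split.
  - rewrite HM; unfold env_union; cbn; now rewrite app_nil_r.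
  - now rewrite HG, env_tail_union, env_tail_lift_shift.
Qed.

(** * Generation and relevance *)

Lemma typed_Var_inv G x s : typed G (Var x) s -> env_eq G (env_single x s).
Proof.
  intro H; remember (Var x) as v.
  induction H as [y s| | |G G' t s s' _ IH HG Hs]; inversion Heqv; subst; [reflexivity|].
  now rewrite <- HG, <- Hs, IH.
Qed.

Lemma typed_Lam_inv G t s : typed G (Lam t) s ->
  exists M s', typed (env_ext M G) t s' /\ ty_eq (TArr M s') s.
Proof.
  intro H; remember (Lam t) as v.
  induction H as [|G M t' s Ht _| |G G' t' s s' _ IH HG Hs]; inversion Heqv; subst.
  - exists M, s; split; [exact Ht|reflexivity].
  - destruct IH as (M & s0 & Ht & Hs0); [reflexivity|].
    exists M, s0; split; [now rewrite <- HG|now rewrite Hs0].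
Qed.

Definition arr (p : list ty * ty) : ty := TArr (fst p) (snd p).

Lemma typed_App_inv G t u r s : typed G (App t u r) s ->
  exists Gt Gu Gr L tau0 tau1,
    mtyped Gt t (ch tau0 (map arr L)) /\
    mtyped Gu u (ch tau1 (concat (map fst L))) /\
    typed (env_ext (map snd L) Gr) r s /\
    env_eq G (env_union Gt (env_union Gu Gr)).
Proof.
  intro H; remember (App t u r) as v.
  induction H as [| |G D Gr t' u' r' s L tau0 tau1 Ht Hu Hr _|G G' t' s s' _ IH HG Hs];
    inversion Heqv; subst.
  - exists G, D, Gr, L, tau0, tau1; repeat split; auto; reflexivity.
  - destruct IH as (Gt & Gu & Gr & L & tau0 & tau1 & Ht & Hu & Hr & HGG); [reflexivity|].
    exists Gt, Gu, Gr, L, tau0, tau1; repeat split; auto.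
    + now rewrite <- Hs.
    + now rewrite <- HG.
Qed.

Scheme typed_mut := Induction for typed Sort Prop
with mtyped_mut := Induction for mtyped Sort Prop.

Lemma typed_occurs G t s : typed G t s -> forall n, occurs n t = true -> G n <> [].
Proof.
  revert G t s.
  apply (typed_mut (fun G t _ _ => forall n, occurs n t = true -> G n <> [])
                   (fun G t _ _ => forall n, occurs n t = true -> G n <> [])); simpl.
  - intros x s n Hocc; apply Nat.eqb_eq in Hocc as ->.
    unfold env_single; rewrite Nat.eqb_refl; discriminate.
  - intros G M t s _ IH n Hocc; exact (IH (S n) Hocc).
  - intros G D Gr t u r s L tau0 tau1 _ IHt _ IHu _ IHr n Hocc E.
    apply app_eq_nil in E as [Et E]; apply app_eq_nil in E as [Eu Er].
    apply Bool.orb_true_iff in Hocc as [Hocc|Hocc];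
      [apply Bool.orb_true_iff in Hocc as [Hocc|Hocc]|].
    + exact (IHt n Hocc Et).
    + exact (IHu n Hocc Eu).
    + exact (IHr (S n) Hocc Er).
  - intros G G' t s s' _ IH HG _ n Hocc; exact (env_eq_nonempty _ _ n HG (IH n Hocc)).
  - intros G t s _ IH; exact IH.
  - intros G D t s M _ IH _ _ n Hocc E; apply app_eq_nil in E as [E _]; exact (IH n Hocc E).
  - intros G G' t M M' _ IH HG _ n Hocc; exact (env_eq_nonempty _ _ n HG (IH n Hocc)).
Qed.

Lemma mtyped_nonempty G t M : mtyped G t M -> M <> [].
Proof.
  induction 1; try discriminate.
  intro E; subst; apply IHmtyped, mset_eq_nil, H1.
Qed.

Lemma mtyped_app G1 G2 t M1 M2 :
  mtyped G1 t M1 -> mtyped G2 t M2 -> mtyped (env_union G1 G2) t (M1 ++ M2).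
Proof.
  intro H; revert G2 M2; induction H; intros G2 M2 H2; simpl.
  - now constructor.
  - rewrite <- env_union_assoc; constructor; auto.
  - rewrite <- H0, <- H1; auto.
Qed.

(** * Anti-lifting and anti-substitution *)

Lemma mtyped_transfer (t t' : term) (F : env -> env)
  (HF : forall A B, env_eq (F (env_union A B)) (env_union (F A) (F B)))
  (H : forall G s, typed G t s -> exists G', typed G' t' s /\ env_eq G (F G')) :
  forall G M, mtyped G t M -> exists G', mtyped G' t' M /\ env_eq G (F G').
Proof.
  intros G M HM; remember t as x.
  induction HM as [G x s Hx|G D x s M Hx HM IH|G G' x M M' HM IH HGG' HMM']; subst.
  - destruct (H _ _ Hx) as [G' [Ht HG]]; exists G'; split; [now constructor|exact HG].
  - destruct (H _ _ Hx) as [G' [Ht HG]].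
    destruct (IH eq_refl H) as [D' [HD HDD]].
    exists (env_union G' D'); split; [now constructor|now rewrite HF, HG, HDD].
  - destruct (IH eq_refl H) as [G2 [HM2 HG2]].
    exists G2; split; [now rewrite <- HMM'|now rewrite <- HGG'].
Qed.

Lemma typed_lift_inv u d c G s : typed G (lift d c u) s ->
  exists G', typed G' u s /\ env_eq G (env_lift d c G').
Proof.
  revert d c G s; induction u as [x|u IHu|t IHt u IHu r IHr]; intros d c G s H; simpl in H.
  - apply typed_Var_inv in H.
    exists (env_single x s); split; [constructor|].
    rewrite H; destruct (Nat.leb_spec c x); env_pointwise.
  - apply typed_Lam_inv in H as (M & s' & Ht & Hs).
    destruct (IHu _ _ _ _ Ht) as [G' [Hu HG]].
    apply env_ext_eq in HG as [HM HG]; cbn in HM.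
    exists (env_tail G'); split.
    + rewrite <- Hs, HM; apply T_abs; now rewrite env_ext_tail.
    + now rewrite HG, env_tail_lift.
  - apply typed_App_inv in H as (Gt & Gu & Gr & L & tau0 & tau1 & Ht & Hu & Hr & HG).
    destruct (mtyped_transfer _ _ _ (env_lift_union d c) (IHt d c) _ _ Ht) as [Gt' [Ht' HGt]].
    destruct (mtyped_transfer _ _ _ (env_lift_union d c) (IHu d c) _ _ Hu) as [Gu' [Hu' HGu]].
    destruct (IHr _ _ _ _ Hr) as [Gr' [Hr' HGr]].
    apply env_ext_eq in HGr as [HL HGr]; cbn in HL.
    exists (env_union Gt' (env_union Gu' (env_tail Gr'))); split.
    + econstructor; [exact Ht'|exact Hu'|]. now rewrite HL, env_ext_tail.
    + now rewrite HG, HGt, HGu, HGr, env_tail_lift, !env_lift_union.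
Qed.

(* If x does not occur in t, u is used zero times in {u/x}t. *)
Definition mtyped0 (G : env) (u : term) (M : list ty) : Prop :=
  (M = [] /\ env_eq G env_empty) \/ mtyped G u M.

Lemma mtyped0_app G1 G2 u M1 M2 :
  mtyped0 G1 u M1 -> mtyped0 G2 u M2 -> mtyped0 (env_union G1 G2) u (M1 ++ M2).
Proof.
  intros [[-> H1]|H1] [[-> H2]|H2]; cbn [app].
  - left; split; [reflexivity|now rewrite H1, H2, env_union_empty_l].
  - right; now rewrite H1, env_union_empty_l.
  - right; now rewrite H2, env_union_empty_r, app_nil_r.
  - right; now apply mtyped_app.
Qed.

Lemma mtyped_subst_inv n u t
  (H : forall G s, typed G (subst n u t) s -> exists Gt M Gu,
     typed (env_insert n M Gt) t s /\ mtyped0 Gu u M /\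
     env_eq G (env_union Gt (env_lift n 0 Gu))) :
  forall G N, mtyped G (subst n u t) N -> exists Gt M Gu,
     mtyped (env_insert n M Gt) t N /\ mtyped0 Gu u M /\
     env_eq G (env_union Gt (env_lift n 0 Gu)).
Proof.
  intros G N HN; remember (subst n u t) as x.
  induction HN as [G x s Hx|G D x s N Hx HN IH|G G' x N N' HN IH HGG' HNN']; subst.
  - destruct (H _ _ Hx) as (Gt & M & Gu & Ht & Hu & HG).
    exists Gt, M, Gu; repeat split; [now constructor|exact Hu|exact HG].
  - destruct (H _ _ Hx) as (Gt1 & M1 & Gu1 & Ht1 & Hu1 & HG1).
    destruct (IH eq_refl H) as (Gt2 & M2 & Gu2 & Ht2 & Hu2 & HG2).
    exists (env_union Gt1 Gt2), (M1 ++ M2), (env_union Gu1 Gu2); repeat split.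
    + rewrite <- env_insert_union; now constructor.
    + now apply mtyped0_app.
    + now rewrite HG1, HG2, env_lift_union, env_union_swap.
  - destruct (IH eq_refl H) as (Gt & M & Gu & Ht & Hu & HG).
    exists Gt, M, Gu; repeat split; [now rewrite <- HNN'|exact Hu|now rewrite <- HGG'].
Qed.

Lemma typed_subst_Var_inv m n u G s : typed G (subst n u (Var m)) s -> exists Gt M Gu,
  typed (env_insert n M Gt) (Var m) s /\ mtyped0 Gu u M /\
  env_eq G (env_union Gt (env_lift n 0 Gu)).
Proof.
  simpl; destruct (Nat.compare_spec m n) as [->|Hmn|Hmn]; intro H.
  - destruct (typed_lift_inv _ _ _ _ _ H) as [Gu [Hu HG]].
    exists env_empty, [s], Gu; repeat split.
    + assert (E : env_eq (env_insert n [s] env_empty) (env_single n s)) by env_pointwise.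
      rewrite E; constructor.
    + right; now constructor.
    + now rewrite HG, env_union_empty_l.
  - apply typed_Var_inv in H.
    exists (env_single m s), [], env_empty; repeat split.
    + assert (E : env_eq (env_insert n [] (env_single m s)) (env_single m s)) by env_pointwise.
      rewrite E; constructor.
    + left; split; reflexivity.
    + rewrite H; env_pointwise.
  - apply typed_Var_inv in H.
    exists (env_single (pred m) s), [], env_empty; repeat split.
    + assert (E : env_eq (env_insert n [] (env_single (pred m) s)) (env_single m s))
        by env_pointwise.
      rewrite E; constructor.
    + left; split; reflexivity.
    + rewrite H; env_pointwise.
Qed.

Lemma typed_subst_inv t n u G s : typed G (subst n u t) s -> exists Gt M Gu,
  typed (env_insert n M Gt) t s /\ mtyped0 Gu u M /\
  env_eq G (env_union Gt (env_lift n 0 Gu)).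
Proof.
  revert n u G s; induction t as [m|t IHt|t IHt t' IHt' r IHr]; intros n u G s H.
  - exact (typed_subst_Var_inv _ _ _ _ _ H).
  - simpl in H; apply typed_Lam_inv in H as (M0 & s' & Ht & Hs).
    destruct (IHt _ _ _ _ Ht) as (Gt & M & Gu & Ht' & Hu & HG).
    apply env_ext_eq_union_lift in HG as [HM0 HG].
    exists (env_tail Gt), M, Gu; repeat split; [|exact Hu|exact HG].
    rewrite <- Hs, HM0; apply T_abs; now rewrite <- env_insert_S.
  - simpl in H; apply typed_App_inv in H as (Ga & Gb & Gr & L & tau0 & tau1 & Ha & Hb & Hr & HG).
    destruct (mtyped_subst_inv _ _ _ (IHt n u) _ _ Ha) as (Ga' & Ma & Ea & Ha' & Ea' & HGa).
    destruct (mtyped_subst_inv _ _ _ (IHt' n u) _ _ Hb) as (Gb' & Mb & Eb & Hb' & Eb' & HGb).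
    destruct (IHr _ _ _ _ Hr) as (Gr' & Mr & Er & Hr' & Er' & HGr).
    apply env_ext_eq_union_lift in HGr as [HL HGr].
    exists (env_union Ga' (env_union Gb' (env_tail Gr'))), (Ma ++ Mb ++ Mr),
           (env_union Ea (env_union Eb Er)); repeat split.
    + rewrite <- !env_insert_union; econstructor; [exact Ha'|exact Hb'|].
      now rewrite HL, <- env_insert_S.
    + now apply mtyped0_app; [|apply mtyped0_app].
    + rewrite HG, HGa, HGb, HGr, !env_lift_union.
      now rewrite (env_union_swap Gb'), env_union_swap.
Qed.

(** * Subject expansion *)

Lemma lift_0 u c : lift 0 c u = u.
Proof.
  revert c; induction u; intro c; simpl; f_equal; auto.
  destruct (c <=? n); lia.
Qed.

Lemma lift_lift u a b c : lift a c (lift b c u) = lift (a + b) c u.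
Proof.
  revert c; induction u; intro c; simpl; f_equal; auto.
  destruct (Nat.leb_spec c n); simpl.
  - destruct (Nat.leb_spec c (n + b)); lia.
  - destruct (Nat.leb_spec c n); lia.
Qed.

Lemma mtyped0_nonempty G u M : mtyped0 G u M -> M <> [] -> mtyped G u M.
Proof. now intros [[-> _]|H]. Qed.

Lemma typed_plug_subst_inv D t u G rho : occurs 0 t = true ->
  typed G (plug D (subst 0 (lift (ldepth D) 0 u) t)) rho ->
  exists G1 G2 M, typed G1 (plug D (Lam t)) (TArr M rho) /\ mtyped G2 u M /\
    env_eq G (env_union G1 G2).
Proof.
  intro Ht; revert u G rho; induction D as [|a b D IH]; intros u G rho H; simpl in *.
  - rewrite lift_0 in H.
    destruct (typed_subst_inv _ _ _ _ _ H) as (Gt & M & Gu & Ht' & Hu & HG).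
    exists Gt, Gu, M; repeat split.
    + apply T_abs; now rewrite <- env_insert_0.
    + apply mtyped0_nonempty; [exact Hu|exact (typed_occurs _ _ _ Ht' 0 Ht)].
    + now rewrite HG, env_lift_0.
  - apply typed_App_inv in H as (Ga & Gb & Gr & L & tau0 & tau1 & Ha & Hb & Hr & HG).
    rewrite <- Nat.add_1_r, <- lift_lift in Hr.
    destruct (IH _ _ _ Hr) as (G1 & G2 & M & H1 & H2 & HGr).
    destruct (mtyped_transfer _ _ _ (env_lift_union 1 0) (fun G s => typed_lift_inv u 1 0 G s)
                _ _ H2) as (G2' & H2' & HG2).
    rewrite HG2 in HGr; apply env_ext_eq_union_lift in HGr as [HL HGr].
    exists (env_union Ga (env_union Gb (env_tail G1))), G2', M; repeat split.
    + econstructor; [exact Ha|exact Hb|]. now rewrite HL, env_ext_tail.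
    + exact H2'.
    + now rewrite HG, HGr, env_lift_0, !env_union_assoc.
Qed.

Lemma mtyped_plug_subst_inv D t u G N : occurs 0 t = true ->
  mtyped G (plug D (subst 0 (lift (ldepth D) 0 u) t)) N ->
  exists G1 G2 L, mtyped G1 (plug D (Lam t)) (map arr L) /\
    mtyped G2 u (concat (map fst L)) /\ mset_eq (map snd L) N /\
    env_eq G (env_union G1 G2).
Proof.
  intros Ht HN; remember (plug D (subst 0 (lift (ldepth D) 0 u) t)) as x.
  induction HN as [G x s Hx|G G' x s N Hx HN IH|G G' x N N' HN IH HGG' HNN']; subst.
  - destruct (typed_plug_subst_inv _ _ _ _ _ Ht Hx) as (G1 & G2 & M & H1 & H2 & HG).
    exists G1, G2, [(M, s)]; simpl; rewrite app_nil_r.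
    repeat split; [now apply M_one|exact H2|reflexivity|exact HG].
  - destruct (typed_plug_subst_inv _ _ _ _ _ Ht Hx) as (G1 & G2 & M & H1 & H2 & HG).
    destruct IH as (G1' & G2' & L & H1' & H2' & HL & HG'); [reflexivity|].
    exists (env_union G1 G1'), (env_union G2 G2'), ((M, s) :: L); repeat split.
    + now constructor.
    + now apply mtyped_app.
    + now apply (app_mset_eq_Proper [s] [s]).
    + now rewrite HG, HG', env_union_swap.
  - destruct IH as (G1 & G2 & L & H1 & H2 & HL & HG); [reflexivity|].
    exists G1, G2, L; repeat split; auto; [now rewrite HL|now rewrite <- HGG'].
Qed.

Lemma ch_nonempty tau M : M <> [] -> ch tau M = M.
Proof. now destruct M. Qed.

Lemma dbeta_root_ne_expand t1 t2 G s : dbeta_root_ne t1 t2 -> typed G t2 s -> typed G t1 s.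
Proof.
  intros [D t u r Ht Hr] H.
  destruct (typed_subst_inv _ _ _ _ _ H) as (Gr & N & E & Hr' & HE & HG).
  apply mtyped0_nonempty in HE; [|exact (typed_occurs _ _ _ Hr' 0 Hr)].
  destruct (mtyped_plug_subst_inv _ _ _ _ _ Ht HE) as (G1 & G2 & L & H1 & H2 & HL & HE').
  rewrite HG, env_lift_0, HE', env_union_comm, <- env_union_assoc.
  apply (T_app _ _ _ _ _ _ _ L s s).
  - now rewrite ch_nonempty; [|apply (mtyped_nonempty _ _ _ H1)].
  - now rewrite ch_nonempty; [|apply (mtyped_nonempty _ _ _ H2)].
  - now rewrite HL, <- env_insert_0.
Qed.

Lemma mtyped_expand t1 t2 (H : forall G s, typed G t2 s -> typed G t1 s) :
  forall G M, mtyped G t2 M -> mtyped G t1 M.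
Proof.
  intros G M HM; remember t2 as x.
  induction HM as [G x s Hx|G G' x s M Hx HM IH|G G' x M M' HM IH HGG' HMM']; subst.
  - constructor; auto.
  - constructor; auto.
  - rewrite <- HGG', <- HMM'; auto.
Qed.

Lemma ctx_closure_expand (R : term -> term -> Prop)
  (HR : forall t1 t2 G s, R t1 t2 -> typed G t2 s -> typed G t1 s) :
  forall t1 t2, ctx_closure R t1 t2 -> forall G s, typed G t2 s -> typed G t1 s.
Proof.
  induction 1 as [t t' Ht|t t' Ht IH|t t' u r Ht IH|t u u' r Hu IH|t u r r' Hr IH];
    intros G s H.
  - now apply (HR t t').
  - apply typed_Lam_inv in H as (M & s' & H & Hs).
    rewrite <- Hs; apply T_abs; auto.
  - apply typed_App_inv in H as (Gt & Gu & Gr & L & tau0 & tau1 & Ht' & Hu & Hr & HG).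
    rewrite HG; econstructor; [exact (mtyped_expand t t' IH _ _ Ht')|exact Hu|exact Hr].
  - apply typed_App_inv in H as (Gt & Gu & Gr & L & tau0 & tau1 & Ht & Hu' & Hr & HG).
    rewrite HG; econstructor; [exact Ht|exact (mtyped_expand u u' IH _ _ Hu')|exact Hr].
  - apply typed_App_inv in H as (Gt & Gu & Gr & L & tau0 & tau1 & Ht & Hu & Hr' & HG).
    rewrite HG; econstructor; [exact Ht|exact Hu|auto].
Qed.

Theorem mainTheorem11 :
  forall (G : env) (t1 t2 : term) (s : ty),
    typed G t2 s -> dbeta_step_ne t1 t2 -> typed G t1 s.
Proof.
  intros G t1 t2 s Ht Hstep.
  exact (ctx_closure_expand _ dbeta_root_ne_expand _ _ Hstep G s Ht).
Qed.
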